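(* Let $\mathbf P=(P,\leq,{}',0,1)$ be an atomic pseudo-orthomodular poset of finite rank. Then its Dedekind-MacNeille completion $\mathrm{DM}(\mathbf P)$ is orthomodular.
   Context: For $M\subseteq P$, $U(M)$, $L(M)$ are the sets of upper and lower bounds; $U(a,b)=U(\{a,b\})$ etc. A poset with complementation is a bounded poset with antitone involution $'$ ($x\le y\Rightarrow y'\le x'$, $x''=x$) with $L(x,x')=\{0\}$, $U(x,x')=\{1\}$; it is pseudo-orthomodular if $L(U(L(x,y),y'),y)=L(x,y)$ for all $x,y$. A subset $S$ is orthogonal if $s\le t'$ for all distinct $s,t\in S$; $\mathbf P$ has finite rank if every orthogonal subset is finite. An atom is a minimal element of $P\setminus\{0\}$; $\mathbf P$ is atomic if every $b>0$ lies above some atom. The Dedekind-MacNeille completion $\mathrm{DM}(\mathbf P)$ is the complete lattice of subsets $B\subseteq P$ with $L(U(B))=B$ under inclusion, with antitone involution $X'=L(\{u'\mid u\in X\})$; a lattice with complementation is orthomodular if $x\vee y=((x\vee y)\wedge y')\vee y$ for all $x,y$. *)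

From Stdlib Require Import List.

Section Defs.
Variable T : Type.
Variable le : T -> T -> Prop.

Definition seteq (A B : T -> Prop) : Prop := forall z, A z <-> B z.
Definition subset (A B : T -> Prop) : Prop := forall z, A z -> B z.
Definition setU (A B : T -> Prop) : T -> Prop := fun z => A z \/ B z.
Definition setI (A B : T -> Prop) : T -> Prop := fun z => A z /\ B z.
Definition pair (x y : T) : T -> Prop := fun z => z = x \/ z = y.
Definition single (x : T) : T -> Prop := fun z => z = x.

Definition Ub (M : T -> Prop) : T -> Prop := fun u => forall m, M m -> le m u.
Definition Lb (M : T -> Prop) : T -> Prop := fun l => forall m, M m -> le l m.

Variables (comp : T -> T) (zero one : T).

Definition poset_with_complementation : Prop :=
  (forall x, le x x) /\
  (forall x y, le x y -> le y x -> x = y) /\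
  (forall x y z, le x y -> le y z -> le x z) /\
  (forall x, le zero x /\ le x one) /\
  (forall x y, le x y -> le (comp y) (comp x)) /\
  (forall x, comp (comp x) = x) /\
  (forall x, seteq (Lb (pair x (comp x))) (single zero)) /\
  (forall x, seteq (Ub (pair x (comp x))) (single one)).

Definition pseudo_orthomodular : Prop :=
  forall x y,
    seteq (Lb (setU (Ub (setU (Lb (pair x y)) (single (comp y)))) (single y)))
          (Lb (pair x y)).

Definition orthogonal (S : T -> Prop) : Prop :=
  forall s t, S s -> S t -> s <> t -> le s (comp t).

Definition finite_set (S : T -> Prop) : Prop :=
  exists l : list T, forall s, S s -> In s l.

Definition finite_rank : Prop :=
  forall S, orthogonal S -> finite_set S.

Definition atom (a : T) : Prop :=
  a <> zero /\ forall b, b <> zero -> le b a -> b = a.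

Definition atomic : Prop :=
  forall b, b <> zero -> exists a, atom a /\ le a b.

(* Dedekind-MacNeille completion: closed subsets B with L(U(B)) = B,
   ordered by inclusion; meet = intersection, join = L(U(X ∪ Y)),
   complement X' = L({u' | u in X}), bottom = L(U(∅)) = L(P), top = P. *)
Definition DM_elem (B : T -> Prop) : Prop := seteq (Lb (Ub B)) B.
Definition DM_meet (X Y : T -> Prop) : T -> Prop := setI X Y.
Definition DM_join (X Y : T -> Prop) : T -> Prop := Lb (Ub (setU X Y)).
Definition DM_comp (X : T -> Prop) : T -> Prop :=
  Lb (fun v => exists u, X u /\ v = comp u).
Definition DM_bot : T -> Prop := Lb (Ub (fun _ => False)).
Definition DM_top : T -> Prop := fun _ => True.

Definition DM_orthomodular : Prop :=
  (forall X, DM_elem X -> DM_elem (DM_comp X)) /\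
  (forall X Y, DM_elem X -> DM_elem Y -> subset X Y ->
      subset (DM_comp Y) (DM_comp X)) /\
  (forall X, DM_elem X -> seteq (DM_comp (DM_comp X)) X) /\
  (forall X, DM_elem X -> seteq (DM_meet X (DM_comp X)) DM_bot) /\
  (forall X, DM_elem X -> seteq (DM_join X (DM_comp X)) DM_top) /\
  (forall X Y, DM_elem X -> DM_elem Y ->
      seteq (DM_join X Y) (DM_join (DM_meet (DM_join X Y) (DM_comp Y)) Y)).

End Defs.

(* In DM(P) a closed set Z containing p splits as Z = p ∨ (Z ∧ p'); this is
   where pseudo-orthomodularity of P enters.  Iterating the split along a
   maximal orthogonal family of atoms m_1, ..., m_n in Z (finite, by finite
   rank) shows Z = m_1 ∨ ... ∨ m_n, atomicity handling the last step where no
   atom is left.  For J = X ∨ Y and K = (J ∧ Y') ∨ Y ⊆ J, a maximal orthogonal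
   family of atoms of K stays maximal in J: an atom of J orthogonal to it lies
   in Y', hence in K.  So J and K are joins of the same atoms. *)
From Stdlib Require Import List Classical ClassicalEpsilon Lia.

Section DedekindMacNeille.

Variables (T : Type) (le : T -> T -> Prop) (comp : T -> T) (zero one : T).

Local Notation L := (Lb T le).
Local Notation U := (Ub T le).
Local Notation DM_elem := (DM_elem T le).
Local Notation DM_comp := (DM_comp T le comp).
Local Notation atom := (atom T le zero).
Local Notation down p := (fun w => le w p).

Lemma DM_elem_L (S : T -> Prop) : DM_elem (L S).
Proof.
  intro z; split.
  - intros H m Hm. apply H. intros l Hl. apply Hl, Hm.
  - intros H u Hu. apply Hu, H.
Qed.

Lemma LU_subset (S S' : T -> Prop) :
  subset T S (L (U S')) -> subset T (L (U S)) (L (U S')).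
Proof. intros H z Hz u Hu. apply Hz. intros s Hs. apply (H s Hs), Hu. Qed.

Lemma DM_elem_setI (X Y : T -> Prop) :
  DM_elem X -> DM_elem Y -> DM_elem (setI T X Y).
Proof.
  intros HX HY z; split.
  - intro H. split; [apply HX | apply HY]; intros u Hu; apply H;
      intros w [Xw Yw]; apply Hu; assumption.
  - intros H u Hu. apply Hu, H.
Qed.

Lemma DM_compP (X : T -> Prop) (x : T) :
  DM_comp X x <-> forall u, X u -> le x (comp u).
Proof.
  split.
  - intros H u Xu. apply H. exists u. split; auto.
  - intros H v [u [Xu ->]]. apply H, Xu.
Qed.

Lemma DM_comp_antitone (X Y : T -> Prop) :
  subset T X Y -> subset T (DM_comp Y) (DM_comp X).
Proof. intros HXY z Hz m [u [Xu ->]]. apply Hz. exists u. auto. Qed.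

Hypothesis le_refl : forall x, le x x.
Hypothesis le_antisym : forall x y, le x y -> le y x -> x = y.
Hypothesis le_trans : forall x y z, le x y -> le y z -> le x z.
Hypothesis le0x : forall x, le zero x.
Hypothesis lex1 : forall x, le x one.
Hypothesis comp_antitone : forall x y, le x y -> le (comp y) (comp x).
Hypothesis compK : forall x, comp (comp x) = x.
Hypothesis comp_L : forall x, seteq T (L (pair T x (comp x))) (single T zero).
Hypothesis comp_U : forall x, seteq T (U (pair T x (comp x))) (single T one).

Lemma le_comp (x y : T) : le x (comp y) -> le y (comp x).
Proof. intro H. rewrite <- (compK y). apply comp_antitone, H. Qed.

Lemma comp_le (x y : T) : le (comp x) y -> le (comp y) x.
Proof. intro H. rewrite <- (compK x). apply comp_antitone, H. Qed.

Lemma DM_elem_down (p : T) : DM_elem (down p).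
Proof.
  intro z; split.
  - intro H. apply H. intros w Hw. exact Hw.
  - intros H u Hu. apply Hu, H.
Qed.

Lemma DM_elem_down_closed (X : T -> Prop) (x y : T) :
  DM_elem X -> X x -> le y x -> X y.
Proof. intros HX Xx yx. apply HX. intros u Hu. apply le_trans with x; auto. Qed.

Lemma DM_compK (X : T -> Prop) : DM_elem X -> seteq T (DM_comp (DM_comp X)) X.
Proof.
  intros HX z; split.
  - intro H. apply HX. intros u Hu. rewrite <- (compK u).
    apply (proj1 (DM_compP _ _) H), DM_compP.
    intros x Xx. apply comp_antitone, Hu, Xx.
  - intro Xz. apply DM_compP. intros v Hv.
    apply le_comp, (proj1 (DM_compP _ _) Hv), Xz.
Qed.

Lemma DM_meet_comp (X : T -> Prop) :
  DM_elem X -> seteq T (DM_meet T X (DM_comp X)) (DM_bot T le).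
Proof.
  intros HX z; split.
  - intros [Xz Hz].
    assert (Hz0 : z = zero).
    { apply (comp_L z z). intros m [-> | ->]; [apply le_refl |].
      apply (proj1 (DM_compP _ _) Hz), Xz. }
    subst z. intros m _. apply le0x.
  - intro H.
    assert (Hz0 : z = zero) by (apply le_antisym; [apply H; intros m [] | apply le0x]).
    subst z. split.
    + apply HX. intros u _. apply le0x.
    + apply DM_compP. intros u _. apply le0x.
Qed.

Lemma DM_join_comp (X : T -> Prop) :
  seteq T (DM_join T le X (DM_comp X)) (DM_top T).
Proof.
  intro z; split; [intros _; exact I |].
  intros _ u Hu.
  assert (Hu1 : u = one).
  { apply (comp_U u u). intros m [-> | ->]; [apply le_refl |].
    apply Hu. right. apply DM_compP. intros x Xx. apply comp_antitone, Hu.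
    left. exact Xx. }
  subst u. apply lex1.
Qed.

Hypothesis PO : pseudo_orthomodular T le comp.

Lemma DM_pseudo_orthomodular (X : T -> Prop) (y z : T) :
  DM_elem X -> le z y ->
  L (U (setU T (setI T X (down y)) (single T (comp y)))) z -> X z.
Proof.
  intros HX zy Hz. apply HX. intros v Hv.
  assert (Hvy : L (pair T v y) z).
  { apply (PO v y). intros m [Hm | ->]; [| exact zy].
    apply Hz. intros w [[Xw wy] | ->].
    - apply Hm. left. intros q [-> | ->]; [apply Hv, Xw | exact wy].
    - apply Hm. right. reflexivity. }
  apply Hvy. left. reflexivity.
Qed.

Lemma DM_orthomodular_split (Z : T -> Prop) (p : T) :
  DM_elem Z -> Z p ->
  subset T Z (L (U (setU T (down p) (setI T Z (down (comp p)))))).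
Proof.
  intros HZ Zp z Zz w Hw.
  assert (pw : le p w) by (apply Hw; left; apply le_refl).
  assert (Hw' : DM_comp Z (comp w)).
  { apply (DM_pseudo_orthomodular (DM_comp Z) (comp p));
      [apply DM_elem_L | apply comp_antitone, pw |].
    intros t Ht. apply comp_le, Hw. right. split.
    - apply HZ. intros u Hu. apply comp_le, Ht. left. split.
      + apply DM_compP. intros x Zx. apply comp_antitone, Hu, Zx.
      + apply comp_antitone, Hu, Zp.
    - apply comp_le, Ht. right. reflexivity. }
  rewrite <- (compK w). apply le_comp, (proj1 (DM_compP _ _) Hw'), Zz.
Qed.

Lemma atom_not_le_comp (e : T) : atom e -> ~ le e (comp e).
Proof. intros [Hne _] H. apply Hne, (comp_L e e). intros m [-> | ->]; auto. Qed.

Definition orthogonal_atoms (A : T -> Prop) (M : list T) : Prop :=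
  NoDup M /\ (forall t, In t M -> atom t /\ A t) /\
  orthogonal T le comp (fun t => In t M).

Definition maximal_orthogonal_atoms (A : T -> Prop) (M : list T) : Prop :=
  orthogonal_atoms A M /\
  forall e, atom e -> A e -> ~ DM_comp (fun t => In t M) e.

Lemma orthogonal_atoms_cons (A : T -> Prop) (M : list T) (e : T) :
  orthogonal_atoms A M -> atom e -> A e -> DM_comp (fun t => In t M) e ->
  orthogonal_atoms A (e :: M).
Proof.
  intros [HnD [HMA Horth]] He Ae HeM.
  pose proof (proj1 (DM_compP _ _) HeM) as HeM'.
  split; [| split].
  - constructor; [| exact HnD].
    intro HeM''. apply (atom_not_le_comp e He), HeM', HeM''.
  - intros t [<- | Ht]; auto.
  - intros s t [<- | Hs] [<- | Ht] Hst.
    + contradiction.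
    + apply HeM', Ht.
    + apply le_comp, HeM', Hs.
    + apply Horth; assumption.
Qed.

Hypothesis AT : atomic T le zero.

Lemma maximal_orthogonal_atoms_span (A : T -> Prop) (M : list T) :
  DM_elem A -> maximal_orthogonal_atoms A M -> subset T A (L (U (fun t => In t M))).
Proof.
  revert A. induction M as [| m M IH];
    intros A HA [[HnD [HMA Horth]] Hmax] x Ax.
  - destruct (classic (x = zero)) as [-> | Hx]; [intros u _; apply le0x |].
    destruct (AT x Hx) as [a [Ha ax]]. exfalso.
    apply (Hmax a Ha); [apply (DM_elem_down_closed A x); assumption |].
    apply DM_compP. intros u [].
  - apply NoDup_cons_iff in HnD. destruct HnD as [HmM HnD].
    assert (Am : A m) by apply (HMA m), in_eq.
    assert (IH1 : subset T (setI T A (down (comp m))) (L (U (fun t => In t M)))).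
    { apply IH; [apply DM_elem_setI; [exact HA | apply DM_elem_down] |].
      split; [split; [exact HnD | split] |].
      - intros t Ht. destruct (HMA t (in_cons m t M Ht)) as [Hta At].
        split; [exact Hta |]. split; [exact At |].
        apply Horth; [apply in_cons, Ht | apply in_eq |].
        intros ->. contradiction.
      - intros s t Hs Ht. apply Horth; apply in_cons; assumption.
      - intros e He [Ae em] HeM. apply (Hmax e He Ae), DM_compP.
        intros t [<- | Ht]; [exact em | apply (proj1 (DM_compP _ _) HeM), Ht]. }
    apply (LU_subset (setU T (down m) (setI T A (down (comp m))))).
    + intros w [wm | Hw] u Hu.
      * apply le_trans with m; [exact wm | apply Hu, in_eq].
      * apply (IH1 w Hw). intros t Ht. apply Hu, in_cons, Ht.
    + apply DM_orthomodular_split; assumption.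
Qed.

Hypothesis FR : finite_rank T le comp.

Lemma maximal_orthogonal_atoms_exist (A : T -> Prop) :
  exists M, maximal_orthogonal_atoms A M.
Proof.
  (* Otherwise every orthogonal family of atoms of A extends, and iterating a
     choice of extensions yields an infinite orthogonal set. *)
  apply NNPP. intro Hno.
  set (extends M e := atom e /\ A e /\ DM_comp (fun t => In t M) e).
  assert (Hext : forall M, orthogonal_atoms A M -> exists e, extends M e).
  { intros M HM. apply NNPP. intro He. apply Hno. exists M.
    split; [exact HM |]. intros e Ha Ae HeM. apply He. exists e. split; auto. }
  set (chain n := Nat.iter n (fun M => epsilon (inhabits zero) (extends M) :: M) nil).
  assert (Hchain : forall n, orthogonal_atoms A (chain n)).
  { induction n as [| n IH].
    - split; [constructor | split; [intros t [] | intros s t []]].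
    - destruct (epsilon_spec (inhabits zero) _ (Hext _ IH)) as [Ha [Ae HeM]].
      apply orthogonal_atoms_cons; assumption. }
  assert (Hmono : forall n d, incl (chain n) (chain (d + n))).
  { intros n d. induction d as [| d IH]; [apply incl_refl | apply incl_tl, IH]. }
  assert (Hlen : forall n, length (chain n) = n).
  { induction n as [| n IH]; [reflexivity | simpl; f_equal; exact IH]. }
  set (union x := exists n, In x (chain n)).
  assert (Horth : orthogonal T le comp union).
  { intros s t [n1 Hs] [n2 Ht] Hst.
    apply (proj2 (proj2 (Hchain (n2 + n1)))); [apply Hmono, Hs | | exact Hst].
    rewrite PeanoNat.Nat.add_comm. apply Hmono, Ht. }
  destruct (FR union Horth) as [l Hl].
  assert (Hincl : incl (chain (S (length l))) l).
  { intros x Hx. apply Hl. exists (S (length l)). exact Hx. }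
  pose proof (NoDup_incl_length (proj1 (Hchain _)) Hincl) as Hle.
  rewrite Hlen in Hle. lia.
Qed.

Lemma DM_orthomodular_law (X Y : T -> Prop) :
  seteq T (DM_join T le X Y)
    (DM_join T le (DM_meet T (DM_join T le X Y) (DM_comp Y)) Y).
Proof.
  set (J := DM_join T le X Y).
  set (K := DM_join T le (DM_meet T J (DM_comp Y)) Y).
  assert (HK : DM_elem K) by apply DM_elem_L.
  assert (YK : subset T Y K) by (intros y Yy u Hu; apply Hu; right; exact Yy).
  assert (KJ : subset T K J).
  { intros x Kx u Hu. apply Kx. intros s [[Js _] | Ys]; [apply Js, Hu |].
    apply Hu. right. exact Ys. }
  intro z; split; [intro Jz | apply KJ].
  destruct (maximal_orthogonal_atoms_exist K) as [M HM].
  pose proof (maximal_orthogonal_atoms_span K M HK HM) as KM.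
  destruct HM as [[HnD [HMK Horth]] Hmax].
  assert (HMJ : maximal_orthogonal_atoms J M).
  { split; [split; [exact HnD | split; [| exact Horth]] |].
    - intros t Ht. destruct (HMK t Ht) as [Hta Kt]. split; [exact Hta | apply KJ, Kt].
    - intros e He Je HeM.
      (* e ⊥ M makes e' an upper bound of M, hence of K ⊇ Y, so e ∈ J ∧ Y' ⊆ K. *)
      assert (Me : U (fun t => In t M) (comp e)).
      { intros t Ht. apply le_comp, (proj1 (DM_compP _ _) HeM), Ht. }
      assert (Ke : K e).
      { intros u Hu. apply Hu. left. split; [exact Je |].
        apply DM_compP. intros y Yy. apply le_comp, (KM y (YK y Yy)), Me. }
      apply (atom_not_le_comp e He), (KM e Ke), Me. }
  apply HK. intros u Hu.
  apply (maximal_orthogonal_atoms_span J M (DM_elem_L _) HMJ z Jz).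
  intros t Ht. apply Hu, HMK, Ht.
Qed.

End DedekindMacNeille.

Theorem theorem7 (T : Type) (le : T -> T -> Prop) (comp : T -> T) (zero one : T) :
  poset_with_complementation T le comp zero one ->
  pseudo_orthomodular T le comp ->
  atomic T le zero ->
  finite_rank T le comp ->
  DM_orthomodular T le comp.
Proof.
  intros [le_refl [le_antisym [le_trans [bounds [comp_antitone [compK [comp_L comp_U]]]]]]]
    PO AT FR.
  assert (le0x : forall x, le zero x) by (intro x; apply bounds).
  assert (lex1 : forall x, le x one) by (intro x; apply bounds).
  split; [| split; [| split; [| split; [| split]]]].
  - intros X _. apply DM_elem_L.
  - intros X Y _ _. apply DM_comp_antitone.
  - intros X. apply DM_compK; assumption.
  - intros X. apply (DM_meet_comp T le comp zero); assumption.
  - intros X _. apply (DM_join_comp T le comp one); assumption.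
  - intros X Y _ _. apply (DM_orthomodular_law T le comp zero); assumption.
Qed.
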